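(* Let $P_k$ be a real symmetric positive semidefinite $n\times n$ matrix, $\tilde P_k\in\mathcal S_n$, and $\hat\Delta_k$ a real symmetric $n\times n$ matrix with nonnegative entries such that $|\tilde P_k-P_k|\leq\hat\Delta_k$ entrywise. Let $S^*_k$ be an optimal solution of $$\min_{S\in\mathcal S_n}\ \operatorname{tr}(\tilde P_k+S)\quad\text{subject to}\quad [S]_{ii}\geq\sum_{j=1}^n[\hat\Delta_k]_{ij}+\sum_{j=1,\,j\neq i}^n|[S]_{ij}|,\ \ i=1,\ldots,n,$$ and set $\hat P_k=\tilde P_k+S_k^*$. Then for every $W\in\{0,1\}^{n\times n}$, $$\|W\odot(\hat P_k-P_k)\|_F\leq\|W\odot(\operatorname{diag}(\hat\Delta_k\mathbf 1)+\hat\Delta_k)\|_F.$$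
   Context: $\mathcal S_n$ denotes the set of real symmetric $n\times n$ matrices; $|M|$ is the entrywise absolute value and $\leq$ between matrices is entrywise; $\odot$ is the entrywise (Hadamard) product; $\|\cdot\|_F$ is the Frobenius norm; $\mathbf 1$ is the all-ones vector; $\operatorname{diag}(v)$ is the diagonal matrix with diagonal $v$. *)

From mathcomp Require Import all_boot all_order all_algebra.
Set Implicit Arguments. Unset Strict Implicit. Unset Printing Implicit Defensive.
Import Order.TTheory GRing.Theory Num.Theory.
Local Open Scope ring_scope.

Definition symmx (R : pzRingType) (n : nat) (A : 'M[R]_n) : Prop := A^T = A.

Definition psd (R : realFieldType) (n : nat) (A : 'M[R]_n) : Prop :=
  symmx A /\ forall x : 'cV[R]_n, 0 <= (x^T *m A *m x) 0 0.

Definition hadamard (R : pzRingType) (m n : nat) (A B : 'M[R]_(m, n)) : 'M[R]_(m, n) :=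
  \matrix_(i, j) (A i j * B i j).

Definition frob (R : rcfType) (m n : nat) (A : 'M[R]_(m, n)) : R :=
  Num.sqrt (\sum_i \sum_j A i j ^+ 2).

Definition diag_rowsum (R : pzRingType) (n : nat) (D : 'M[R]_n) : 'M[R]_n :=
  diag_mx (\row_i \sum_j D i j).

Definition feasible (R : realDomainType) (n : nat) (Dhat S : 'M[R]_n) : Prop :=
  symmx S /\
  forall i : 'I_n, \sum_j Dhat i j + \sum_(j | j != i) `|S i j| <= S i i.

Definition optimal (R : realDomainType) (n : nat) (Pt Dhat S : 'M[R]_n) : Prop :=
  feasible Dhat S /\
  forall S' : 'M[R]_n, feasible Dhat S' -> \tr (Pt + S) <= \tr (Pt + S').

From mathcomp Require Import all_boot all_order all_algebra.
Import Order.TTheory GRing.Theory Num.Theory.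
Local Open Scope ring_scope.

(* Feasibility gives [S i i - (Dhat 1)_i >= sum_{j <> i} |S i j| >= 0] for every i,
   and diag(Dhat 1) is feasible, so an optimal S has total slack
   [tr S - tr diag(Dhat 1) <= 0]; hence every slack vanishes and the optimum is
   exactly diag(Dhat 1).  The error Phat - P is then bounded entrywise by
   diag(Dhat 1) + Dhat, and the Frobenius norm of a Hadamard product is monotone
   in the entrywise absolute values. *)

Section OptimalSolution.

Variables (R : realDomainType) (n : nat) (Dhat : 'M[R]_n).

Lemma feasible_diag_rowsum : feasible Dhat (diag_rowsum Dhat).
Proof.
split; first by rewrite /symmx /diag_rowsum tr_diag_mx.
move=> i; rewrite [X in _ + X]big1 ?addr0; first by rewrite !mxE eqxx mulr1n.
by move=> j ji; rewrite !mxE eq_sym (negbTE ji) mulr0n normr0.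
Qed.

Lemma feasible_trace_le_diag_rowsum (S : 'M[R]_n) :
  feasible Dhat S -> \tr S <= \tr (diag_rowsum Dhat) -> S = diag_rowsum Dhat.
Proof.
move=> [_ HS] Htr.
pose slack i := S i i - \sum_j Dhat i j.
have off_le_slack i : \sum_(j | j != i) `|S i j| <= slack i by rewrite lerBrDl.
have slack_ge0 i : 0 <= slack i.
  exact: le_trans (sumr_ge0 _ (fun j _ => normr_ge0 _)) (off_le_slack i).
have sum_slack0 : \sum_i slack i = 0.
  apply: le_anti; rewrite sumr_ge0 // andbT sumrB subr_le0.
  by apply: le_trans Htr _; rewrite mxtrace_diag; under eq_bigr do rewrite mxE.
have slack0 i : slack i = 0 by apply: (psumr_eq0P (fun i _ => slack_ge0 i) sum_slack0).
have off0 i j : j != i -> S i j = 0.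
  move=> ji; apply/normr0_eq0.
  have Hoff : \sum_(k | k != i) `|S i k| = 0.
    by apply: le_anti; rewrite sumr_ge0 // andbT -[leRHS](slack0 i).
  exact: (psumr_eq0P (fun k _ => normr_ge0 (S i k)) Hoff).
apply/matrixP => i j; rewrite !mxE.
have [<-|ij] := eqVneq i j; last by rewrite mulr0n off0 // eq_sym.
by rewrite mulr1n; apply/eqP; rewrite -subr_eq0 -/(slack i) slack0.
Qed.

Lemma optimal_diag_rowsum (Pt S : 'M[R]_n) :
  optimal Pt Dhat S -> S = diag_rowsum Dhat.
Proof.
move=> [HS Hopt]; apply: feasible_trace_le_diag_rowsum => //.
by have := Hopt _ feasible_diag_rowsum; rewrite !mxtraceD lerD2l.
Qed.

End OptimalSolution.

Lemma diag_rowsum_error_bound (R : realDomainType) (n : nat) (P Pt Dhat : 'M[R]_n) :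
  (forall i j, 0 <= Dhat i j) ->
  (forall i j, `|Pt i j - P i j| <= Dhat i j) ->
  forall i j, `|(Pt + diag_rowsum Dhat - P) i j| <= (diag_rowsum Dhat + Dhat) i j.
Proof.
move=> D0 HD i j; rewrite !mxE.
have [<-|ij] := eqVneq i j; last by rewrite mulr0n add0r addr0.
rewrite mulr1n addrAC (le_trans (ler_normD _ _)) // [leLHS]addrC lerD //.
by rewrite ger0_norm // sumr_ge0.
Qed.

Section Frobenius.

Variables (R : rcfType) (m n : nat).

Lemma frob_le_norm (A B : 'M[R]_(m, n)) :
  (forall i j, `|A i j| <= `|B i j|) -> frob A <= frob B.
Proof.
move=> AB; apply: ler_wsqrtr; apply: ler_sum => i _; apply: ler_sum => j _.
by rewrite -real_normK ?num_real // -[leRHS]real_normK ?num_real // lerXn2r ?nnegrE.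
Qed.

Lemma frob_hadamard_le (W A B : 'M[R]_(m, n)) :
  (forall i j, `|A i j| <= B i j) -> frob (hadamard W A) <= frob (hadamard W B).
Proof.
move=> AB; apply: frob_le_norm => i j; rewrite !mxE !normrM ler_wpM2l //.
exact: le_trans (AB i j) (ler_norm _).
Qed.

End Frobenius.

Theorem mainTheorem4 (R : rcfType) (n : nat) (P Pt Dhat Sstar : 'M[R]_n) :
  psd P ->
  symmx Pt ->
  symmx Dhat ->
  (forall i j, 0 <= Dhat i j) ->
  (forall i j, `|Pt i j - P i j| <= Dhat i j) ->
  optimal Pt Dhat Sstar ->
  forall W : 'M[R]_n, (forall i j, W i j = 0 \/ W i j = 1) ->
    frob (hadamard W ((Pt + Sstar) - P))
      <= frob (hadamard W (diag_rowsum Dhat + Dhat)).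
Proof.
move=> _ _ _ D0 HD /optimal_diag_rowsum -> W _.
exact/frob_hadamard_le/diag_rowsum_error_bound.
Qed.
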